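(* Let $X$ be a scalable monoid over a ring $R$. The relation $\sim$ on $X$ is a congruence with respect to the operations $(x,y)\mapsto xy$ and $(\lambda,x)\mapsto\lambda\cdot x$; that is, if $x\sim x'$ and $y\sim y'$ then $xy\sim x'y'$, and if $x\sim x'$ then $\lambda\cdot x\sim\lambda\cdot x'$ for every $\lambda\in R$.
   Context: A scalable monoid over a (unital, associative, not necessarily commutative) ring $R$ is a monoid $X$ (identity $1_X$, product written $xy$) together with a map $R\times X\to X$, $(\alpha,x)\mapsto\alpha\cdot x$, such that $1\cdot x=x$, $\alpha\cdot(\beta\cdot x)=\alpha\beta\cdot x$ and $\alpha\cdot(xy)=(\alpha\cdot x)y=x(\alpha\cdot y)$ for all $\alpha,\beta\in R$, $x,y\in X$. The relation $\sim$ on $X$ is defined by $x\sim y$ iff $\alpha\cdot x=\beta\cdot y$ for some $\alpha,\beta\in R$; it is an equivalence relation. *)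

From mathcomp Require Import all_boot all_algebra.
Set Implicit Arguments. Unset Strict Implicit. Unset Printing Implicit Defensive.
Import GRing.Theory.
Local Open Scope ring_scope.

Record scalable_monoid (R : pzRingType) := ScalableMonoid {
  sm_carrier :> Type;
  sm_one : sm_carrier;
  sm_mul : sm_carrier -> sm_carrier -> sm_carrier;
  sm_scale : R -> sm_carrier -> sm_carrier;
  sm_mulA : forall x y z, sm_mul x (sm_mul y z) = sm_mul (sm_mul x y) z;
  sm_mul1x : forall x, sm_mul sm_one x = x;
  sm_mulx1 : forall x, sm_mul x sm_one = x;
  sm_scale1 : forall x, sm_scale 1 x = x;
  sm_scaleA : forall (a b : R) x, sm_scale a (sm_scale b x) = sm_scale (a * b) x;
  sm_scale_mull : forall (a : R) x y, sm_scale a (sm_mul x y) = sm_mul (sm_scale a x) y;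
  sm_scale_mulr : forall (a : R) x y, sm_scale a (sm_mul x y) = sm_mul x (sm_scale a y)
}.

Definition sm_sim (R : pzRingType) (X : scalable_monoid R) (x y : X) : Prop :=
  exists a b : R, sm_scale a x = sm_scale b y.

From mathcomp Require Import all_boot all_algebra.
Local Open Scope ring_scope.
Import GRing.Theory.

(* Scaling by 0 absorbs every other scalar, since 0 * a = 0.  Hence x ~ y
   holds exactly when 0 . x = 0 . y, and 0 . _ is compatible with both
   operations because scalars move freely through products. *)

Section ScalableMonoidSim.

Variables (R : pzRingType) (X : scalable_monoid R).

Lemma sm_scale0_scale (a : R) (x : X) : sm_scale 0 (sm_scale a x) = sm_scale 0 x.
Proof. by rewrite sm_scaleA mul0r. Qed.

Lemma sm_simE (x y : X) : sm_sim x y <-> sm_scale 0 x = sm_scale 0 y.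
Proof.
split; last by move=> xy; exists 0, 0.
by case=> a [b abxy]; rewrite -(sm_scale0_scale a) -(sm_scale0_scale b y) abxy.
Qed.

Lemma sm_sim_mul (x x' y y' : X) :
  sm_sim x x' -> sm_sim y y' -> sm_sim (sm_mul x y) (sm_mul x' y').
Proof.
move=> /sm_simE xx' /sm_simE yy'; apply/sm_simE.
by rewrite sm_scale_mull xx' -sm_scale_mull sm_scale_mulr yy' -sm_scale_mulr.
Qed.

Lemma sm_sim_scale (lam : R) (x x' : X) :
  sm_sim x x' -> sm_sim (sm_scale lam x) (sm_scale lam x').
Proof. by move=> /sm_simE xx'; apply/sm_simE; rewrite !sm_scale0_scale. Qed.

End ScalableMonoidSim.

Theorem proposition2p13 (R : pzRingType) (X : scalable_monoid R) :
  (forall x x' y y' : X, sm_sim x x' -> sm_sim y y' ->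
      sm_sim (sm_mul x y) (sm_mul x' y')) /\
  (forall (lam : R) (x x' : X), sm_sim x x' ->
      sm_sim (sm_scale lam x) (sm_scale lam x')).
Proof. split; [exact: sm_sim_mul | exact: sm_sim_scale]. Qed.
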